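(* Let $q=2^n>2$ and let $g:\mathbb{F}_{q^2}\to\mathbb{F}_{q^2}$ be a function such that $f(x)=g(x^{q-1})$ takes values in $\mathbb{F}_2$ for all $x\in\mathbb{F}_{q^2}$. Then for $\alpha\in\mathbb{F}_{q^2}$, $$W_f(\alpha)=\begin{cases}(-1)^{g(0)}-\sum_{\lambda\in U}(-1)^{g(\lambda)}+(-1)^{g(\alpha^{1-q})}\,q, & \text{if } \alpha\neq0,\\[2pt] (-1)^{g(0)}+(q-1)\sum_{\lambda\in U}(-1)^{g(\overline{\lambda}^2)}, & \text{if } \alpha=0.\end{cases}$$
   Context: For $x\in\mathbb{F}_{q^2}$ write $\overline{x}=x^{q}$; $U=\{\eta\in\mathbb{F}_{q^2}:\eta^{q+1}=1\}$ is the unit circle. For $\alpha\ne0$, $\alpha^{1-q}$ denotes $(\alpha^{q-1})^{-1}$. The Walsh transform of a Boolean function $f:\mathbb{F}_{q^2}\to\mathbb{F}_2$ is $W_f(\alpha)=\sum_{x\in\mathbb{F}_{q^2}}(-1)^{f(x)+\mathrm{Tr}_1^{2n}(\alpha x)}$, where $\mathrm{Tr}_1^{2n}$ is the absolute trace of $\mathbb{F}_{2^{2n}}$. Values in $\mathbb{F}_2$ in exponents of $-1$ are identified with $0,1\in\mathbb{Z}$ (note $g$ takes values in $\mathbb{F}_2$ on $\{0\}\cup U$). *)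

From HB Require Import structures.
From mathcomp Require Import all_boot all_order all_algebra all_field.
Set Implicit Arguments. Unset Strict Implicit. Unset Printing Implicit Defensive.
Import Order.TTheory GRing.Theory Num.Theory.
Local Open Scope ring_scope.

(* (-1)^b for b in F_2 (embedded in F as 0 / 1), as an integer. *)
Definition sgnF (F : fieldType) (b : F) : int := if b == 0 then 1 else -1.

Definition abs_trace (F : fieldType) (m : nat) (x : F) : F :=
  \sum_(i < m) x ^+ (2 ^ i).

Definition walsh (F : finFieldType) (m : nat) (f : F -> F) (a : F) : int :=
  \sum_(x : F) sgnF (f x + abs_trace m (a * x)).

Definition unit_circle (F : finFieldType) (q : nat) : {set F} :=
  [set e : F | e ^+ q.+1 == 1].

From HB Require Import structures.
From mathcomp Require Import all_boot all_order all_algebra all_field.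
From mathcomp Require Import zify.
Import Order.TTheory GRing.Theory Num.Theory.
Local Open Scope ring_scope.
Set Implicit Arguments. Unset Strict Implicit.

(* Every x <> 0 is determined up to F_q^* by l = x^(q-1), which lies on the
   unit circle U, and E_l = {x | x^q = l x} = {0} U {x | x^(q-1) = l} is an
   F_q-line, so |E_l| = q (root counting and the partition of F^* by l also
   give |U| = q + 1).  Hence
     W_f(a) = (-1)^g(0) + sum_(l in U) (-1)^g(l) (S_l - 1),
   where S_l is the sum of psi_a(x) = (-1)^Tr(a x) over the group E_l, so
   S_l is q or 0.  For a = 0 every S_l is q.  For a <> 0, psi_a is trivial on
   E_l0 with l0 = a^(1-q) since a E_l0 = F_q lies in the kernel of the trace,
   while orthogonality of psi_a gives sum_l S_l = q; so S_l = 0 for l <> l0. *)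

Lemma sum_char_subgroup (V : finZmodType) (R : idomainType) (chi : V -> R)
    (L : {set V}) :
  {in L &, forall x y, x - y \in L} ->
  {in L &, {morph chi : x y / x + y >-> x * y}} ->
  {in L, forall x, chi x = 1} \/ \sum_(x in L) chi x = 0.
Proof.
move=> subL chiD.
have [/forall_inP chi1|] := boolP [forall x in L, chi x == 1].
  by left=> x /chi1/eqP.
rewrite negb_forall_in => /exists_inP [x0 Lx0 chix0]; right.
have L0 : 0 \in L by rewrite -(subrr x0) subL.
have LDx0 x : (x + x0 \in L) = (x \in L).
  apply/idP/idP => [Lxx0|Lx]; first by rewrite -(addrK x0 x) subL.
  by rewrite -[x0]opprK subL // -sub0r subL.
set S := \sum_(x in L) chi x.
have SE : S = S * chi x0.
  rewrite {1}/S (reindex_inj (addIr x0)) mulr_suml /=.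
  by apply: eq_big => [x|x]; rewrite LDx0 // => Lx; rewrite chiD.
move/eqP: SE; rewrite -subr_eq0 -{1}[S]mulr1 -mulrBr mulf_eq0 subr_eq0.
by rewrite [1 == _]eq_sym (negbTE chix0) orbF => /eqP.
Qed.

Lemma card_roots_lt (F : finIdomainType) (p : {poly F}) (A : {pred F}) :
  p != 0 -> {in A, forall x, root p x} -> (#|A| < size p)%N.
Proof.
move=> p0 rootA; rewrite cardE max_poly_roots ?enum_uniq //.
by apply/allP => x; rewrite mem_enum => /rootA.
Qed.

Lemma expf_card_pred (F : finFieldType) (x : F) : x != 0 -> x ^+ #|F|.-1 = 1.
Proof.
move=> x0; apply: (mulIf x0); rewrite mul1r -exprSr prednK ?expf_card //.
by apply/card_gt0P; exists 0.
Qed.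

Section Char2.

Variable F : fieldType.
Hypothesis pcharF2 : 2%N \in [pchar F].

Lemma exprD_pow2 k (x y : F) : (x + y) ^+ (2 ^ k) = x ^+ (2 ^ k) + y ^+ (2 ^ k).
Proof. by apply: exprDn_pchar; rewrite pnatX (pnatE _ (isT : prime 2)) pcharF2. Qed.

Lemma expr_pow2_inj k : injective (fun x : F => x ^+ (2 ^ k)).
Proof.
move=> x y /= xy; have : (x - y) ^+ (2 ^ k) == 0.
  by rewrite oppr_pchar2 // exprD_pow2 xy addrr_pchar2.
by rewrite expf_eq0 subr_eq0 => /andP[_ /eqP].
Qed.

Lemma sgnF_add (b c : F) : (b == 0) || (b == 1) -> (c == 0) || (c == 1) ->
  sgnF (b + c) = sgnF b * sgnF c.
Proof.
rewrite /sgnF => /orP[]/eqP-> /orP[]/eqP->.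
all: by rewrite ?add0r ?addr0 ?addrr_pchar2 ?eqxx ?oner_eq0 ?mul1r ?mulr1.
Qed.

Lemma abs_traceD m : {morph abs_trace m : x y / x + y :> F}.
Proof.
by move=> x y; rewrite /abs_trace -big_split; apply: eq_bigr => i _; rewrite exprD_pow2.
Qed.

Lemma abs_trace0 m : abs_trace m (0 : F) = 0.
Proof. by rewrite /abs_trace big1 // => i _; rewrite expr0n expn_eq0. Qed.

Lemma abs_trace_subfield n (y : F) : y ^+ (2 ^ n) = y -> abs_trace (2 * n) y = 0.
Proof.
move=> yq; rewrite /abs_trace mul2n -addnn big_split_ord /=.
rewrite [X in _ + X](eq_bigr (fun i : 'I_n => y ^+ (2 ^ i))) ?addrr_pchar2 // => i _.
by rewrite expnD exprM yq.
Qed.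

End Char2.

Definition trace_char (F : fieldType) (m : nat) (a x : F) : int :=
  sgnF (abs_trace m (a * x)).

Lemma trace_char0 (F : fieldType) (m : nat) (a : F) : trace_char m a 0 = 1.
Proof. by rewrite /trace_char mulr0 abs_trace0 /sgnF eqxx. Qed.

Section FiniteChar2.

Variable F : finFieldType.
Hypothesis pcharF2 : 2%N \in [pchar F].

Lemma sum_unit_circle_frob (R : nmodType) (h : F -> R) d k :
  \sum_(l in unit_circle F d) h (l ^+ (2 ^ k)) = \sum_(l in unit_circle F d) h l.
Proof.
rewrite [RHS](reindex_inj (expr_pow2_inj pcharF2 (k:=k))); apply: eq_bigl => l.
rewrite !inE exprAC -[in RHS](expr1n F (2 ^ k)).
by apply/eqP/eqP => [->|/expr_pow2_inj->].
Qed.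

Variable m : nat.
Hypotheses (m_gt0 : (0 < m)%N) (cardF : #|F| = (2 ^ m)%N).

Lemma abs_trace_sqr (x : F) : abs_trace m x ^+ 2 = abs_trace m x.
Proof.
rewrite -[_ ^+ 2]/(pFrobenius_aut pcharF2 _) rmorph_sum /abs_trace /=.
case: m m_gt0 cardF => // k _ cardFk.
rewrite big_ord_recr big_ord_recl /= !pFrobenius_autE -exprM -expnSr -cardFk.
rewrite expf_card addrC; congr (_ + _).
by apply: eq_bigr => i _; rewrite pFrobenius_autE -exprM -expnSr.
Qed.

Lemma abs_trace01 (x : F) : (abs_trace m x == 0) || (abs_trace m x == 1).
Proof.
have := abs_trace_sqr x; rewrite expr2 => /eqP; rewrite -subr_eq0 -[X in _ - X]mulr1.
by rewrite -mulrBr mulf_eq0 subr_eq0 eq_sym.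
Qed.

Lemma exists_abs_trace_eq1 : exists y : F, abs_trace m y = 1.
Proof.
pose P : {poly F} := \sum_(i < m) 'X^(2 ^ i).
have PE y : P.[y] = abs_trace m y.
  by rewrite horner_sum; apply: eq_bigr => i _; rewrite hornerXn.
have P1 : P`_1 = 1.
  rewrite /P; case: m m_gt0 => // k _; rewrite coef_sum big_ord_recl big1 => [|i _].
    by rewrite coefXn expn0 eqxx addr0.
  by rewrite coefXn expnS mul2n; case: (2 ^ i)%N.
have P_neq0 : P != 0.
  by apply/eqP => P0; move: P1; rewrite P0 coef0 => /eqP; rewrite eq_sym oner_eq0.
have sizeP : (size P <= #|F|)%N.
  rewrite cardF; apply: leq_trans (size_sum _ _ _) _.
  by apply/bigmax_leqP_seq => i _ _; rewrite size_polyXn ltn_exp2l.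
case: (pickP (fun y : F => abs_trace m y == 1)) => [y /eqP trace_y|trace_neq1].
  by exists y.
case/eqP: P_neq0; apply: (roots_geq_poly_eq0 _ (enum_uniq F)); last by rewrite -cardE.
apply/allP => y _; move: (abs_trace01 y) (trace_neq1 y).
by rewrite /root PE => /orP[]->.
Qed.

Lemma trace_charD (a : F) : {morph trace_char m a : x y / x + y >-> x * y}.
Proof. by move=> x y; rewrite /trace_char mulrDr abs_traceD // sgnF_add ?abs_trace01. Qed.

Lemma sum_trace_char_eq0 (a : F) : a != 0 -> \sum_x trace_char m a x = 0.
Proof.
move=> a_neq0; have [y trace_y] := exists_abs_trace_eq1.
have [||all1|] := @sum_char_subgroup _ _ (trace_char m a) [set: F].
- by move=> x z _ _; rewrite inE.
- by move=> x z _ _; rewrite trace_charD.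
- have := all1 (y / a) (in_setT _).
  by rewrite /trace_char mulrC divfK // trace_y /sgnF oner_eq0.
- by rewrite (eq_bigl _ _ (in_setT (T:=F))).
Qed.

End FiniteChar2.

Definition frob_eigenset (F : finFieldType) (q : nat) (l : F) : {set F} :=
  [set x | x ^+ q == l * x].

Lemma unit_circleV (F : finFieldType) (q : nat) (l : F) :
  l \in unit_circle F q -> l^-1 \in unit_circle F q.
Proof. by rewrite !inE exprVn => /eqP->; rewrite invr1. Qed.

Section UnitCircle.

Variables (F : finFieldType) (q : nat).
Hypotheses (q_gt1 : (1 < q)%N) (cardF : #|F| = (q ^ 2)%N).

Local Notation U := (unit_circle F q).
Local Notation E := (frob_eigenset q).

Lemma frob_eigenset0 (l : F) : 0 \in E l.
Proof. by rewrite inE mulr0 expr0n eqn0Ngt ltnW. Qed.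

Lemma mem_frob_eigenset (l x : F) : x != 0 -> (x \in E l) = (x ^+ q.-1 == l).
Proof.
move=> x_neq0; rewrite inE -[in X in X == _](ltn_predK q_gt1) exprSr.
exact: (inj_eq (mulIf x_neq0)).
Qed.

Lemma expr_pred_unit_circle (x : F) : x != 0 -> x ^+ q.-1 \in U.
Proof.
move=> x_neq0; rewrite inE -exprM -(expf_card_pred x_neq0) cardF.
by rewrite -mulnn (_ : q.-1 * q.+1 = (q * q).-1)%N //; nia.
Qed.

Lemma sum_polar (R : nmodType) (G : F -> R) :
  \sum_x G x = G 0 + \sum_(l in U) \sum_(x in E l | x != 0) G x.
Proof.
rewrite (bigD1 0) //=; congr (_ + _).
rewrite (partition_big (fun x => x ^+ q.-1) (mem U)) => [|x]; last first.
  exact: expr_pred_unit_circle.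
apply: eq_bigr => l _; apply: eq_bigl => x.
by have [->|x_neq0] := eqVneq x 0; rewrite /= ?andbF ?andbT ?mem_frob_eigenset.
Qed.

Lemma card_frob_eigenset_le (l : F) : (#|E l| <= q)%N.
Proof.
have q1_gt0 : (0 < q.-1)%N by lia.
have p_neq0 : 'X^(q.-1) - l%:P != 0 :> {poly F} by rewrite -size_poly_eq0 size_XnsubC.
rewrite -ltnS -[in X in (_ < X)%N](ltn_predK q_gt1) -(size_XnsubC l q1_gt0) -size_mulX //.
apply: card_roots_lt => [|x]; first by rewrite mulf_neq0 ?polyX_eq0.
rewrite inE => /eqP Ex; rewrite /root !hornerE mulrBl -exprSr (ltn_predK q_gt1).
by rewrite Ex subrr.
Qed.

Lemma card_unit_circle_le : (#|U| <= q.+1)%N.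
Proof.
rewrite -ltnS -(size_Xn_sub_1 F (ltn0Sn q)); apply: card_roots_lt.
  by rewrite -size_poly_eq0 size_Xn_sub_1.
by move=> x; rewrite inE /root !hornerE => /eqP->; rewrite subrr.
Qed.

Lemma sum_card_frob_eigenset : (\sum_(l in U) #|E l|.-1 = (q ^ 2).-1)%N.
Proof.
have : (\sum_(x : F) 1 = 1 + \sum_(l in U) \sum_(x in E l | x != 0%R) 1)%N.
  exact (sum_polar (fun _ => 1%N)).
rewrite sum1_card cardF add1n => ->; apply: eq_bigr => l _.
rewrite sum1_card (cardD1 0) frob_eigenset0 add1n /=.
by apply: eq_card => x; rewrite [in RHS]unfold_in !inE andbC.
Qed.

Lemma card_frob_eigenset_gt0 (l : F) : (0 < #|E l|)%N.
Proof. by apply/card_gt0P; exists 0; rewrite frob_eigenset0. Qed.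

Lemma card_unit_circle : #|U| = q.+1.
Proof.
have : ((q ^ 2).-1 <= #|U| * q.-1)%N.
  rewrite -sum_card_frob_eigenset -sum_nat_const; apply: leq_sum => l _.
  by rewrite -!subn1 leq_sub2r ?card_frob_eigenset_le.
by have := card_unit_circle_le; rewrite -mulnn; nia.
Qed.

Lemma card_frob_eigenset (l : F) : l \in U -> #|E l| = q.
Proof.
have le_card l' : l' \in U -> (#|E l'|.-1 <= q.-1 ?= iff (#|E l'|.-1 == q.-1))%N.
  by move=> _; apply/leqif_eq; rewrite -!subn1 leq_sub2r ?card_frob_eigenset_le.
have := (leqif_sum le_card).2.
rewrite sum_card_frob_eigenset sum_nat_const card_unit_circle -mulnn.
rewrite (_ : (q * q).-1 = q.+1 * q.-1)%N ?eqxx; last by nia.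
move/esym/forall_inP => eq_cards Ul; move/eqP: (eq_cards l Ul).
by have := card_frob_eigenset_gt0 l; lia.
Qed.

Lemma sum_polar_mul (R : ringType) (h : F -> R) (chi : F -> R) : chi 0 = 1 ->
  \sum_x h (x ^+ q.-1) * chi x
    = h 0 + \sum_(l in U) h l * (\sum_(x in E l) chi x - 1).
Proof.
move=> chi0; rewrite sum_polar expr0n (_ : q.-1 == 0 = false)%N ?chi0 ?mulr1; last by lia.
congr (_ + _); apply: eq_bigr => l _.
rewrite [\sum_(x in E l) _](bigD1 0) ?frob_eigenset0 //= chi0 addrC addrK mulr_sumr.
apply: eq_bigr => x /andP[Ex x_neq0].
by move: Ex; rewrite mem_frob_eigenset // => /eqP->.
Qed.

End UnitCircle.

Section Walsh.

Variables (F : finFieldType) (n : nat).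
Hypotheses (pcharF2 : 2%N \in [pchar F]) (n_gt0 : (0 < n)%N).
Hypothesis cardF : #|F| = ((2 ^ n) ^ 2)%N.

Local Notation q := (2 ^ n)%N.
Local Notation U := (unit_circle F q).
Local Notation E := (frob_eigenset q).
Local Notation chi := (trace_char (2 * n)).

Let q_gt1 : (1 < q)%N. Proof. by rewrite -{1}(expn0 2) ltn_exp2l. Qed.
Let cardF_exp2 : #|F| = (2 ^ (2 * n))%N. Proof. by rewrite cardF -expnM mulnC. Qed.
Let two_n_gt0 : (0 < 2 * n)%N. Proof. by rewrite muln_gt0. Qed.

Lemma frob_eigenset_subr (l : F) : {in E l &, forall x y, x - y \in E l}.
Proof.
move=> x y; rewrite !inE oppr_pchar2 // exprD_pow2 // => /eqP-> /eqP->.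
by rewrite mulrDr.
Qed.

Lemma sum_trace_char_eigenset (a l : F) : l \in U ->
  \sum_(x in E l) chi a x = q \/ \sum_(x in E l) chi a x = 0.
Proof.
move=> Ul.
have chiD : {in E l &, {morph chi a : x y / x + y >-> x * y}}.
  by move=> x y _ _; apply: trace_charD.
have [chi1|->] := sum_char_subgroup (@frob_eigenset_subr l) chiD; last by right.
by left; rewrite (eq_bigr (fun _ => 1)) // sumr_const card_frob_eigenset ?natz.
Qed.

Lemma sum_trace_char0_eigenset (l : F) : l \in U -> \sum_(x in E l) chi 0 x = q.
Proof.
move=> Ul; rewrite (eq_bigr (fun _ => 1)) => [|x _].
  by rewrite sumr_const card_frob_eigenset ?natz.
by rewrite /trace_char mul0r abs_trace0 /sgnF eqxx.
Qed.

Lemma sum_trace_char_eigenset_conj (a : F) : a != 0 ->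
  \sum_(x in E (a ^+ q.-1)^-1) chi a x = q.
Proof.
move=> a_neq0; rewrite (eq_bigr (fun _ => 1)) => [|x].
  rewrite sumr_const card_frob_eigenset ?natz //.
  by rewrite unit_circleV ?expr_pred_unit_circle.
rewrite inE => /eqP xq; rewrite /trace_char abs_trace_subfield ?/sgnF ?eqxx //.
have aq : a ^+ q = a ^+ q.-1 * a by rewrite -exprSr (ltn_predK q_gt1).
by rewrite exprMn xq aq -mulrA mulrCA mulVKf ?expf_neq0.
Qed.

Lemma sum_trace_char_eigensets (a : F) : a != 0 ->
  \sum_(l in U) \sum_(x in E l) chi a x = q.
Proof.
move=> a_neq0; have := sum_polar_mul q_gt1 cardF (fun _ => 1) (trace_char0 (2 * n) a).
rewrite (eq_bigr (chi a) (fun x _ => mul1r _)) sum_trace_char_eq0 //.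
rewrite (eq_bigr _ (fun l _ => mul1r _)) sumrB sumr_const card_unit_circle //.
rewrite -[1 *+ _]/((q.+1)%:R : int) natz; set S := \sum_(l in U) _; lia.
Qed.

Lemma sum_trace_char_eigenset_neq0 (a l : F) : a != 0 -> l \in U ->
  \sum_(x in E l) chi a x = if l == (a ^+ q.-1)^-1 then q%:Z else 0.
Proof.
move=> a_neq0 Ul; set l0 := (a ^+ q.-1)^-1.
have [->|l_neq_l0] := eqVneq l l0; first exact: sum_trace_char_eigenset_conj.
have Ul0 : l0 \in U by rewrite unit_circleV ?expr_pred_unit_circle.
have := sum_trace_char_eigensets a_neq0.
rewrite (bigD1 l0) //= sum_trace_char_eigenset_conj // -[RHS]addr0 => /addrI.
move/psumr_eq0P; apply; last by rewrite Ul.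
by move=> l' /andP[Ul' _]; case: (sum_trace_char_eigenset a Ul') => ->.
Qed.

Variable g : F -> F.
Hypothesis g01 : forall x : F, (g (x ^+ q.-1) == 0) || (g (x ^+ q.-1) == 1).

Local Notation f := (fun x => g (x ^+ q.-1)).

Lemma walsh_polar (a : F) :
  walsh (2 * n) f a
    = sgnF (g 0) + \sum_(l in U) sgnF (g l) * (\sum_(x in E l) chi a x - 1).
Proof.
rewrite /walsh -(sum_polar_mul q_gt1 cardF _ (trace_char0 _ a)).
by apply: eq_bigr => x _; rewrite sgnF_add ?abs_trace01.
Qed.

Lemma walsh0 :
  walsh (2 * n) f 0 = sgnF (g 0) + (q%:Z - 1) * \sum_(l in U) sgnF (g ((l ^+ q) ^+ 2)).
Proof.
rewrite walsh_polar; under eq_bigr => l Ul do rewrite sum_trace_char0_eigenset //.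
under [X in _ * X]eq_bigr do rewrite -exprM -expnSr.
by rewrite (sum_unit_circle_frob pcharF2 (fun l => sgnF (g l))) -mulr_suml mulrC.
Qed.

Lemma walsh_neq0 (a : F) : a != 0 ->
  walsh (2 * n) f a
    = sgnF (g 0) - \sum_(l in U) sgnF (g l) + sgnF (g ((a ^+ q.-1)^-1)) * q%:Z.
Proof.
move=> a_neq0; set l0 := (a ^+ q.-1)^-1.
have Ul0 : l0 \in U by rewrite unit_circleV ?expr_pred_unit_circle.
rewrite walsh_polar -addrA; congr (_ + _).
rewrite (eq_bigr (fun l => sgnF (g l) * (if l == l0 then q%:Z else 0) - sgnF (g l))).
  2: by move=> l Ul; rewrite sum_trace_char_eigenset_neq0 // mulrBr mulr1.
rewrite sumrB [X in X - _](bigD1 _ Ul0) /= eqxx big1 => [|l].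
  by rewrite addr0 addrC.
by case/andP=> _ /negbTE->; rewrite mulr0.
Qed.

End Walsh.

Unset Implicit Arguments.

Theorem proposition3 (F : finFieldType) (n : nat) (g : F -> F) :
  (1 < n)%N -> 2%N \in [pchar F] -> #|F| = ((2 ^ n) ^ 2)%N ->
  (forall x : F, (g (x ^+ (2 ^ n).-1) == 0) || (g (x ^+ (2 ^ n).-1) == 1)) ->
  forall a : F,
    walsh (2 * n) (fun x => g (x ^+ (2 ^ n).-1)) a =
    if a != 0 then
      sgnF (g 0) - \sum_(l in unit_circle F (2 ^ n)) sgnF (g l)
        + sgnF (g ((a ^+ (2 ^ n).-1)^-1)) * (2 ^ n)%:Z
    else
      sgnF (g 0) + ((2 ^ n)%:Z - 1)
        * \sum_(l in unit_circle F (2 ^ n)) sgnF (g ((l ^+ (2 ^ n)) ^+ 2)).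
Proof.
move=> n_gt1 pcharF2 cardF g01 a; have n_gt0 := ltnW n_gt1.
have [->|a_neq0] := eqVneq a 0; first exact: walsh0.
exact: walsh_neq0.
Qed.
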